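(* Let $\Pi=\{321,312,123,231\}$ (consecutive patterns). For $k\ge 1$, $$I_{2k+1}(\Pi;q)=2\,q^k C_k(q),\qquad I_{2k}(\Pi;q)=q^{k-1}C_{k-1}(q)+q^kC_k(q).$$
   Context: For $\sigma\in S_3$ and $\pi=\pi_1\cdots\pi_n\in S_n$, $\pi$ contains the consecutive pattern $\sigma$ if there is an index $i$ with $1\le i\le n-2$ such that $\pi_i\pi_{i+1}\pi_{i+2}$ is order-isomorphic to $\sigma$; otherwise $\pi$ avoids $\sigma$. $\mathrm{Av}_n(\Pi)$ is the set of $\pi\in S_n$ avoiding every pattern in $\Pi$. $\mathrm{inv}(\pi)=\#\{(i,j):i<j,\ \pi_i>\pi_j\}$ and $I_n(\Pi;q)=\sum_{\pi\in\mathrm{Av}_n(\Pi)}q^{\mathrm{inv}(\pi)}$. A Dyck path of length $k$ is a lattice path from $(0,0)$ to $(k,k)$ with unit steps $(1,0)$ and $(0,1)$ containing no point $(x,y)$ with $x>y$; its area is the number of unit squares lying below the path and completely above the diagonal. $C_k(q)=\sum_P q^{\mathrm{area}(P)}$ over Dyck paths $P$ of length $k$ (so $C_0(q)=1$). *)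

From HB Require Import structures.
From mathcomp Require Import all_boot all_order all_algebra all_fingroup.
Set Implicit Arguments. Unset Strict Implicit. Unset Printing Implicit Defensive.
Import GRing.Theory.
Local Open Scope ring_scope.

(* One-line notation of a permutation pi in S_n: the word pi_1 ... pi_n
   (values 0..n-1, which does not affect order-isomorphism). *)
Definition perm_word (n : nat) (p : 'S_n) : seq nat :=
  [seq val (p j) | j <- enum 'I_n].

Definition occurs_at (sigma w : seq nat) (i : nat) : bool :=
  [forall a : 'I_3, forall b : 'I_3,
     (nth 0 w (i + a) < nth 0 w (i + b))%N == (nth 0 sigma a < nth 0 sigma b)%N].

Definition contains_consec (sigma w : seq nat) : bool :=
  has (fun i => (i + 2 < size w)%N && occurs_at sigma w i) (iota 0 (size w)).

Definition avoids_all (Pi : seq (seq nat)) (n : nat) (p : 'S_n) : bool :=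
  all (fun sigma => ~~ contains_consec sigma (perm_word p)) Pi.

Definition inv_num (n : nat) (p : 'S_n) : nat :=
  #|[set ij : 'I_n * 'I_n | (ij.1 < ij.2)%N && (p ij.2 < p ij.1)%N]|.

Definition Ipoly (Pi : seq (seq nat)) (n : nat) : {poly int} :=
  \sum_(p : 'S_n | avoids_all Pi p) 'X^(inv_num p).

(* Lattice paths: true = north step (0,1), false = east step (1,0). *)
Definition n_north (s : seq bool) : nat := count id s.
Definition n_east (s : seq bool) : nat := count negb s.

Definition is_dyck (k : nat) (s : seq bool) : bool :=
  [&& n_north s == k, n_east s == k &
      all (fun m => n_east (take m s) <= n_north (take m s))%N
          (iota 0 (size s).+1)].

(* Area: for each east step from (x,y) to (x+1,y), the unit squares of column x
   that lie below the path and completely above the diagonal are those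
   [x,x+1]x[j,j+1] with x+1 <= j < y, i.e. y - (x+1) of them. *)
Fixpoint area_aux (s : seq bool) (x y : nat) : nat :=
  match s with
  | [::] => 0
  | true :: s' => area_aux s' x y.+1
  | false :: s' => (y - x.+1) + area_aux s' x.+1 y
  end%N.
Definition area (s : seq bool) : nat := area_aux s 0 0.

Definition Cq (k : nat) : {poly int} :=
  \sum_(t : (k.*2).-tuple bool | is_dyck k t) 'X^(area t).

Definition PiSet : seq (seq nat) :=
  [:: [:: 3; 2; 1]; [:: 3; 1; 2]; [:: 1; 2; 3]; [:: 2; 3; 1]]%N.

From mathcomp Require Import all_boot all_order all_algebra all_fingroup.
From mathcomp Require Import zify.
Set Implicit Arguments. Unset Strict Implicit. Unset Printing Implicit Defensive.
Import GRing.Theory.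

(* A permutation avoids 321, 312, 123 and 231 consecutively iff each of its
   consecutive triples is order-isomorphic to 132 or 213, i.e. iff it
   alternates and p_i < p_(i+2) for all i.  Its entries in even positions and
   those in odd positions then both increase, so it is determined by the word
   f recording, for each value v, whether v sits at an even position: v sits
   at position 2 #{u < v | f u} if f v, and at 2 #{u < v | ~~ f u} + 1
   otherwise.  Alternation becomes a ballot condition on f; after dropping the
   forced initial letter (for an initial ascent) or complementing the word
   (for an initial descent), f is a Dyck path of semilength m, and the number
   of inversions is m plus its area.  Permutations starting with an ascent
   thus contribute q^m C_m(q) for n = 2m+1 and n = 2m+2, those starting with
   a descent contribute q^m C_m(q) for n = 2m and n = 2m+1. *)

Definition pcount (b : bool) (f : nat -> bool) (v : nat) : nat :=
  \sum_(u < v) (f u == b).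

Lemma pcount0 b f : pcount b f 0 = 0.
Proof. by rewrite /pcount big_ord0. Qed.

Lemma pcountS b f v : pcount b f v.+1 = pcount b f v + (f v == b).
Proof. by rewrite /pcount big_ord_recr. Qed.

Lemma pcount_shift b f v :
  pcount b f v.+1 = (f 0 == b) + pcount b (fun i => f i.+1) v.
Proof. by rewrite /pcount big_ord_recl. Qed.

Lemma pcountTF f v : pcount true f v + pcount false f v = v.
Proof.
elim: v => [|v IH]; first by rewrite !pcount0.
by rewrite !pcountS; case: (f v) => /=; lia.
Qed.

Lemma leq_pcount b f u v : u <= v -> pcount b f u <= pcount b f v.
Proof.
move=> /subnK <-; elim: (v - u) => [|w IH]; first by rewrite add0n.
by rewrite addSn pcountS; lia.
Qed.

Lemma ltn_pcount b f u v : u < v -> f u = b -> pcount b f u < pcount b f v.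
Proof.
move=> uv fu; apply: (@leq_trans (pcount b f u.+1)); last exact: leq_pcount.
by rewrite pcountS fu eqxx addn1.
Qed.

Lemma eq_pcount b f g v :
  (forall u, u < v -> f u = g u) -> pcount b f v = pcount b g v.
Proof. by move=> fg; apply: eq_bigr => i _; rewrite fg. Qed.

Definition place (f : nat -> bool) (v : nat) : nat :=
  if f v then 2 * pcount true f v else 2 * pcount false f v + 1.

Lemma odd_place f v : odd (place f v) = ~~ f v.
Proof.
by rewrite /place; case: (f v) => /=; [rewrite oddM | rewrite oddD oddM].
Qed.

Lemma place_even f u j : place f u = 2 * j -> f u /\ pcount true f u = j.
Proof. by rewrite /place; case: (f u) => h; split => //; lia. Qed.

Lemma place_odd f u j : place f u = 2 * j + 1 -> f u = false /\ pcount false f u = j.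
Proof. by rewrite /place; case: (f u) => h; split => //; lia. Qed.

Lemma ltn_place f u v : u < v -> f u = f v -> place f u < place f v.
Proof.
by move=> uv fuv; rewrite /place -fuv; case fu: (f u); have := ltn_pcount uv fu; lia.
Qed.

Lemma place_inj f : injective (place f).
Proof.
move=> u v e; have fuv : f u = f v by apply: negb_inj; rewrite -!odd_place e.
case: (ltngtP u v) => // h.
- by have := ltn_place h fuv; rewrite e ltnn.
- by have := ltn_place h (esym fuv); rewrite e ltnn.
Qed.

Lemma ltn_place_same_parity f u v :
  place f u < place f v -> odd (place f u) = odd (place f v) -> u < v.
Proof.
move=> lt_uv ep; have fuv : f u = f v by apply: negb_inj; rewrite -!odd_place ep.
case: (ltngtP u v) => // h.
- by have := ltn_place h (esym fuv); lia.
- by move: lt_uv; rewrite h ltnn.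
Qed.

(* [f] has as many [false] letters below [n] as there are odd positions below [n]. *)
Definition balanced n f := 2 * pcount false f n <= n <= 2 * pcount false f n + 1.

Lemma place_bound n f v : balanced n f -> v < n -> place f v < n.
Proof.
rewrite /balanced /place => /andP [h1 h2] vn.
have := pcountTF f n; have := pcountTF f v.
by case fv: (f v); have := ltn_pcount vn fv; lia.
Qed.

Definition place_ord n f (v : 'I_n) : 'I_n := odflt v (insub (place f v)).

Lemma place_ordE n f v : balanced n f -> val (@place_ord n f v) = place f v.
Proof.
move=> bal; rewrite /place_ord; case: insubP => [w _ -> //|].
by rewrite (place_bound bal (ltn_ord v)).
Qed.

Lemma place_ord_inj n f : balanced n f -> injective (@place_ord n f).
Proof.
by move=> bal u v e; apply/val_inj/(@place_inj f); rewrite -!place_ordE // e.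
Qed.

(* The identity when [h] is not injective, so that [arrange] below is total. *)
Definition perm_of n (h : 'I_n -> 'I_n) : 'S_n :=
  if injectiveP h is ReflectT h_inj then perm h_inj else 1%g.

Lemma perm_ofE n (h : 'I_n -> 'I_n) : injective h -> perm_of h =1 h.
Proof.
move=> h_inj x; rewrite /perm_of; case: injectiveP => [h_inj'|]; first by rewrite permE.
by move=> /(_ h_inj).
Qed.

Definition arrange n f : 'S_n := ((perm_of (@place_ord n f))^-1)%g.

Lemma arrangeVE n f v : balanced n f -> val (((arrange n f)^-1)%g v) = place f v.
Proof. by move=> bal; rewrite /arrange invgK perm_ofE ?place_ordE //; apply: place_ord_inj. Qed.

Lemma place_arrange n f x : balanced n f -> place f (arrange n f x) = x.
Proof. by move=> bal; rewrite -arrangeVE // permK. Qed.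

Lemma eq_arrange n f g : (forall v, v < n -> f v = g v) -> arrange n f = arrange n g.
Proof.
move=> fg; have eq_place v : v < n -> place f v = place g v.
  by move=> lt_vn; rewrite /place fg // !(@eq_pcount _ f g) // => u lt_uv; apply: fg; lia.
have eq_ord : @place_ord n f =1 @place_ord n g by move=> v; rewrite /place_ord eq_place.
rewrite /arrange /perm_of; congr (_^-1)%g.
case: injectiveP => [f_inj|f_ninj]; case: injectiveP => [g_inj|g_ninj] //.
- by apply/permP => x; rewrite !permE eq_ord.
- by case: g_ninj => x y; rewrite -!eq_ord; apply: f_inj.
- by case: f_ninj => x y; rewrite !eq_ord; apply: g_inj.
Qed.

Definition pw n (p : 'S_n) i := nth 0 (perm_word p) i.

Lemma pwE n (p : 'S_n) i (lt_in : i < n) : pw p i = p (Ordinal lt_in).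
Proof.
rewrite /pw /perm_word (nth_map (Ordinal lt_in)) ?size_enum_ord //.
by congr (nat_of_ord (p _)); apply: val_inj; rewrite /= nth_enum_ord.
Qed.

Lemma pw_ord n (p : 'S_n) (x : 'I_n) : pw p x = p x.
Proof. by rewrite (pwE p (ltn_ord x)); congr (nat_of_ord (p _)); apply: val_inj. Qed.

Lemma pw_inj n (p : 'S_n) i j : i < n -> j < n -> pw p i = pw p j -> i = j.
Proof. by move=> lt_in lt_jn; rewrite (pwE p lt_in) (pwE p lt_jn) => /val_inj /perm_inj []. Qed.

Lemma size_perm_word n (p : 'S_n) : size (perm_word p) = n.
Proof. by rewrite /perm_word size_map size_enum_ord. Qed.

Lemma pw_arrange n f i : i < n -> balanced n f ->
  pw (arrange n f) i < n /\ place f (pw (arrange n f) i) = i.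
Proof. by move=> lt_in bal; rewrite (pwE _ lt_in) place_arrange. Qed.

Lemma pw_arrange_place n f u : balanced n f -> u < n -> pw (arrange n f) (place f u) = u.
Proof.
move=> bal lt_un; have [_ e] := pw_arrange (place_bound bal lt_un) bal.
exact: place_inj e.
Qed.

Lemma arrange_parity n f v : balanced n f -> v < n ->
  f v = ~~ odd (pw ((arrange n f)^-1)%g v).
Proof. by move=> bal lt_vn; rewrite (pwE _ lt_vn) arrangeVE // odd_place negbK. Qed.

Lemma forall_ord3 (P : 'I_3 -> bool) :
  [forall a, P a] = [&& P (@Ordinal 3 0 isT), P (@Ordinal 3 1 isT) & P (@Ordinal 3 2 isT)].
Proof.
apply/forallP/and3P => [P_all|[P0 P1 P2]]; first by rewrite !P_all.
by case=> [[|[|[|//]]] lt_a3]; [move: P0 | move: P1 | move: P2]; congr P; apply: val_inj.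
Qed.

Lemma occurs_at_factor sigma w i :
  occurs_at sigma w i = occurs_at sigma [:: nth 0 w i; nth 0 w i.+1; nth 0 w i.+2] 0.
Proof. by rewrite /occurs_at !forall_ord3 /= !addn0 !addn1 !addn2. Qed.

(* [x y z] is order-isomorphic to 132 or 213. *)
Definition allowed3 x y z := (x < z) && ((x < y) != (y < z)).

Lemma avoid_PiSet_factor x y z : x != y -> y != z -> x != z ->
  all (fun sigma => ~~ occurs_at sigma [:: x; y; z] 0) PiSet = allowed3 x y z.
Proof.
rewrite /PiSet /= andbT /occurs_at !forall_ord3 /= /allowed3 => nxy nyz nxz.
case: (ltngtP x y) nxy => // h1 _; case: (ltngtP y z) nyz => // h2 _;
  case: (ltngtP x z) nxz => // h3 _; rewrite ?ltnn //=; lia.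
Qed.

Lemma contains_consecPn sigma w :
  reflect (forall i, i.+2 < size w -> ~~ occurs_at sigma w i) (~~ contains_consec sigma w).
Proof.
apply: (iffP hasPn) => [nocc i lt_iw | nocc i _]; last by rewrite addn2; case: ltnP => //= /nocc.
by have := nocc i; rewrite mem_iota add0n addn2 lt_iw (ltnW (ltnW lt_iw)) => /(_ isT).
Qed.

Lemma avoids_allP n (p : 'S_n) :
  reflect (forall i, i.+2 < n -> allowed3 (pw p i) (pw p i.+1) (pw p i.+2))
          (avoids_all PiSet p).
Proof.
have pw_neq i j : i < n -> j < n -> i != j -> pw p i != pw p j.
  by move=> lt_in lt_jn; apply: contra => /eqP /pw_inj ->.
have factor i : i.+2 < n -> allowed3 (pw p i) (pw p i.+1) (pw p i.+2) =
    all (fun sigma => ~~ occurs_at sigma (perm_word p) i) PiSet.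
  move=> lt_in; rewrite -avoid_PiSet_factor.
    by apply: (eq_all _ PiSet) => sigma; rewrite [in RHS]occurs_at_factor.
  1-3: by apply: pw_neq; lia.
apply: (iffP allP) => [avoid i lt_in | allowed sigma Psigma].
- rewrite factor //; apply/allP => sigma /avoid /contains_consecPn; apply.
  by rewrite size_perm_word.
- apply/contains_consecPn => i; rewrite size_perm_word => lt_in.
  by have := allowed i lt_in; rewrite factor // => /allP; apply.
Qed.

Definition skip_increasing n (P : nat -> nat) := forall i, i.+2 < n -> P i < P i.+2.

Definition alternating n (up : bool) (P : nat -> nat) :=
  forall i, i.+1 < n -> (P i < P i.+1) = (up == ~~ odd i).

Definition starts_up n (p : 'S_n) := pw p 0 < pw p 1.

Lemma avoids_starts_upP n (p : 'S_n) up : 1 < n ->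
  avoids_all PiSet p && (starts_up p == up) <->
  skip_increasing n (pw p) /\ alternating n up (pw p).
Proof.
move=> lt1n; split.
- move=> /andP [/avoids_allP allowed /eqP start]; split.
  + by move=> i lt_in; case/andP: (allowed i lt_in).
  + elim=> [|i IH] lt_in; first by move: start; rewrite /starts_up /= => ->; case: up.
    case/andP: (allowed i lt_in) => _; rewrite IH ?(ltnW lt_in) //=.
    by case: (pw p i.+1 < pw p i.+2); case: up {start IH}; case: (odd i).
- move=> [inc alt]; apply/andP; split.
  + apply/avoids_allP => i lt_in; rewrite /allowed3 inc //= alt ?(ltnW lt_in) // alt //=.
    by case: up {alt}; case: (odd i).
  + by rewrite /starts_up alt //; case: up {alt}.
Qed.

Lemma arrange_skip_increasing n f : balanced n f -> skip_increasing n (pw (arrange n f)).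
Proof.
move=> bal i lt_in; have [_ e1] := pw_arrange lt_in bal.
have [_ e0] := pw_arrange (ltnW (ltnW lt_in)) bal.
by apply: (@ltn_place_same_parity f); rewrite e0 e1 //= negbK.
Qed.

(* A value [u] at odd position [2j+1] must exceed the values at positions [2j]
   and, if it exists, [2j+2]; so [j+1], resp. [j+2], values below [u] sit at
   even positions. *)
Definition ballot_up n f := forall u, u < n -> f u = false ->
  (if 2 * pcount false f u + 2 < n then pcount false f u + 2 else pcount false f u + 1)
    <= pcount true f u.

(* A value [v] at even position [2i] must exceed the value at position [2i+1]
   when it exists. *)
Definition ballot_down n f := forall v, v < n -> f v = true ->
  2 * pcount true f v + 1 < n -> pcount true f v + 1 <= pcount false f v.

Definition ballot (up : bool) n f := if up then ballot_up n f else ballot_down n f.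

Lemma odd_double_half1 i : odd i -> i = 2 * i./2 + 1.
Proof. by move=> odd_i; have := odd_double_half i; rewrite odd_i -mul2n /=; lia. Qed.

Lemma even_double_half i : ~~ odd i -> i = 2 * i./2.
Proof. by move=> /negbTE even_i; have := odd_double_half i; rewrite even_i -mul2n /=; lia. Qed.

Lemma alternating_ballot_up n f :
  balanced n f -> alternating n true (pw (arrange n f)) -> ballot_up n f.
Proof.
move=> bal alt u lt_un fu; set j := pcount false f u.
have place_u : place f u = 2 * j + 1 by rewrite /place fu.
have lt_pn := place_bound bal lt_un; rewrite place_u in lt_pn.
case: ifP => lt_2j2n.
- have [_ v_place] := pw_arrange lt_2j2n bal; set v := pw _ (2 * j + 2) in v_place.
  have [fv cv] : f v /\ pcount true f v = j + 1 by apply: place_even; rewrite v_place; lia.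
  have := alt (2 * j + 1); rewrite (_ : (2 * j + 1).+1 = 2 * j + 2); last lia.
  rewrite lt_2j2n -place_u pw_arrange_place // -/v odd_place negbK => /(_ isT).
  rewrite fu => /negbT; rewrite -leqNgt leq_eqVlt => /orP [/eqP e|lt_vu].
    by move: fv; rewrite e fu.
  by have := ltn_pcount lt_vu fv; lia.
- have lt_2jn : 2 * j < n by lia.
  have [_ v_place] := pw_arrange lt_2jn bal; set v := pw _ (2 * j) in v_place.
  have [fv cv] := place_even v_place.
  have := alt (2 * j); rewrite (_ : (2 * j).+1 = 2 * j + 1); last lia.
  rewrite lt_pn -place_u pw_arrange_place // -/v oddM /= => /(_ isT) lt_vu.
  by have := ltn_pcount lt_vu fv; lia.
Qed.

Lemma ballot_up_alternating n f :
  balanced n f -> ballot_up n f -> alternating n true (pw (arrange n f)).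
Proof.
move=> bal ballot i lt_in.
have [u_lt u_place] := pw_arrange (ltnW lt_in) bal.
have [v_lt v_place] := pw_arrange lt_in bal.
set u := pw _ i in u_lt u_place *; set v := pw _ i.+1 in v_lt v_place *.
case: (boolP (odd i)) => odd_i /=.
- have ei := odd_double_half1 odd_i; set j := i./2 in ei.
  have [fu cu] := place_odd (etrans u_place ei).
  have [fv cv] : f v /\ pcount true f v = j + 1 by apply: place_even; rewrite v_place; lia.
  apply/negP => lt_uv; have := leq_pcount true f (ltnW lt_uv); have := ballot u u_lt fu.
  by rewrite cu; case: ifP; lia.
- have ei := even_double_half odd_i; set j := i./2 in ei.
  have [fu cu] := place_even (etrans u_place ei).
  have [fv cv] : f v = false /\ pcount false f v = j by apply: place_odd; rewrite v_place; lia.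
  rewrite ltnNge; apply/negP => le_vu; have := leq_pcount true f le_vu.
  by have := ballot v v_lt fv; rewrite cv; case: ifP; lia.
Qed.

Lemma alternating_ballot_down n f :
  balanced n f -> alternating n false (pw (arrange n f)) -> ballot_down n f.
Proof.
move=> bal alt v lt_vn fv lt_2in; set i := pcount true f v in lt_2in *.
have place_v : place f v = 2 * i by rewrite /place fv.
have [_ u_place] := pw_arrange lt_2in bal; set u := pw _ (2 * i + 1) in u_place.
have [fu cu] := place_odd u_place.
have := alt (2 * i); rewrite (_ : (2 * i).+1 = 2 * i + 1); last lia.
rewrite lt_2in -place_v pw_arrange_place // place_v oddM /= -/u => /(_ isT) /negbT.
rewrite -leqNgt leq_eqVlt => /orP [/eqP e|lt_uv]; first by move: fv; rewrite -e fu.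
by have := ltn_pcount lt_uv fu; lia.
Qed.

Lemma ballot_down_alternating n f :
  balanced n f -> ballot_down n f -> alternating n false (pw (arrange n f)).
Proof.
move=> bal ballot i lt_in.
have [u_lt u_place] := pw_arrange (ltnW lt_in) bal.
have [v_lt v_place] := pw_arrange lt_in bal.
set u := pw _ i in u_lt u_place *; set v := pw _ i.+1 in v_lt v_place *.
case: (boolP (odd i)) => odd_i /=.
- have ei := odd_double_half1 odd_i; set j := i./2 in ei.
  have [fu cu] := place_odd (etrans u_place ei).
  have [fv cv] : f v /\ pcount true f v = j + 1 by apply: place_even; rewrite v_place; lia.
  have lt_2jn : 2 * j < n by lia.
  have [w_lt w_place] := pw_arrange lt_2jn bal; set w := pw _ (2 * j) in w_lt w_place.
  have [fw cw] := place_even w_place.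
  have := ballot w w_lt fw; rewrite cw => bound_w.
  have lt_uw : u < w.
    by rewrite ltnNge; apply/negP => le_wu; have := leq_pcount false f le_wu; lia.
  have lt_wv : w < v.
    by apply: (@ltn_place_same_parity f); rewrite w_place v_place ?oddD ?oddM //=; lia.
  by rewrite (ltn_trans lt_uw lt_wv).
- have ei := even_double_half odd_i; set j := i./2 in ei.
  have [fu cu] := place_even (etrans u_place ei).
  have [fv cv] : f v = false /\ pcount false f v = j by apply: place_odd; rewrite v_place; lia.
  have := ballot u u_lt fu; rewrite cu => bound_u.
  by apply/negP => lt_uv; have := leq_pcount false f (ltnW lt_uv); lia.
Qed.

Lemma ballotP up n f : balanced n f ->
  ballot up n f <-> alternating n up (pw (arrange n f)).
Proof.
move=> bal; case: up; split.
- exact: ballot_up_alternating.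
- exact: alternating_ballot_up.
- exact: ballot_down_alternating.
- exact: alternating_ballot_down.
Qed.

Lemma sum_odd_ord n : \sum_(x < n) odd x = n./2.
Proof.
elim: n => [|n IH]; first by rewrite big_ord0.
by rewrite big_ord_recr /= IH uphalf_half addnC.
Qed.

Definition parity_word n (p : 'S_n) (v : nat) : bool := ~~ odd (pw (p^-1)%g v).

Lemma balanced_parity_word n (p : 'S_n) : balanced n (parity_word p).
Proof.
rewrite /balanced; have -> : pcount false (parity_word p) n = n./2.
  rewrite /pcount -sum_odd_ord (reindex_inj (@perm_inj _ p)) /=.
  by apply: eq_bigr => i _; rewrite /parity_word pw_ord permK; case: (odd _).
by have := odd_double_half n; rewrite -mul2n; case: (odd n) => /=; lia.
Qed.

Definition parity_sorted n (p : 'S_n) :=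
  forall x y : 'I_n, x < y -> odd x = odd y -> p x < p y.

(* Determine [p^-1 v] by strong induction on [v]: a smaller position of the
   same parity would carry a smaller value. *)
Lemma parity_sorted_inj n (p p' : 'S_n) : parity_sorted p -> parity_sorted p' ->
  (forall v, odd ((p^-1)%g v) = odd ((p'^-1)%g v)) -> p = p'.
Proof.
move=> sorted sorted' same_parity.
suff pVE m (v : 'I_n) : v < m -> (p^-1)%g v = (p'^-1)%g v.
  by apply: invg_inj; apply/permP => v; apply: (pVE v.+1).
elim: m v => [//|m IH] v; rewrite ltnS leq_eqVlt => /orP [/eqP ev|]; last exact: IH.
case: (ltngtP (val ((p^-1)%g v)) (val ((p'^-1)%g v))) => h; last exact: val_inj.
- have lt := sorted' _ _ h (same_parity v); rewrite permKV in lt.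
  have := IH (p' ((p^-1)%g v)); rewrite -ev => /(_ lt); rewrite permK => e.
  have e2 : p' ((p^-1)%g v) = v by rewrite -[p' _](permKV p) e permKV.
  by move: lt; rewrite e2 ltnn.
- have lt := sorted _ _ h (esym (same_parity v)); rewrite permKV in lt.
  have := IH (p ((p'^-1)%g v)); rewrite -ev => /(_ lt); rewrite permK => e.
  have e2 : p ((p'^-1)%g v) = v by apply: (@perm_inj _ (p'^-1)%g); rewrite -e.
  by move: lt; rewrite e2 ltnn.
Qed.

Lemma skip_increasing_parity_sorted n (p : 'S_n) :
  skip_increasing n (pw p) -> parity_sorted p.
Proof.
move=> inc.
have inc_step d i : i + 2 * d.+1 < n -> pw p i < pw p (i + 2 * d.+1).
  elim: d i => [|d IH] i lt_in; first by rewrite muln1 addn2; apply: inc; rewrite -addn2.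
  apply: (ltn_trans (IH i _)); first lia.
  by rewrite (_ : i + 2 * d.+2 = (i + 2 * d.+1).+2); [apply: inc|]; lia.
move=> x y lt_xy odd_xy.
have d_even : ~~ odd (y - x) by rewrite oddB ?(ltnW lt_xy) // odd_xy addbb.
have := inc_step ((y - x)./2).-1 x.
rewrite (_ : x + 2 * ((y - x)./2).-1.+1 = y); last first.
  move: (even_double_half d_even) lt_xy; set h := (y - x)./2.
  move: (val x) (val y) => a b e lt_ab; clearbody h.
  by rewrite prednK; lia.
by rewrite -!pw_ord; apply; apply: ltn_ord.
Qed.

Lemma arrange_parity_word n (p : 'S_n) :
  skip_increasing n (pw p) -> arrange n (parity_word p) = p.
Proof.
move=> inc; have bal := balanced_parity_word p.
apply: parity_sorted_inj; last 1 first.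
- by move=> v; rewrite arrangeVE // odd_place /parity_word negbK pw_ord.
- exact/skip_increasing_parity_sorted/arrange_skip_increasing.
- exact: skip_increasing_parity_sorted.
Qed.

Lemma inv_num_invg n (p : 'S_n) : inv_num p =
  #|[set uv : 'I_n * 'I_n | (uv.1 < uv.2) && ((p^-1)%g uv.2 < (p^-1)%g uv.1)]|.
Proof.
pose swap_values (ij : 'I_n * 'I_n) := (p ij.2, p ij.1).
have swap_inj : injective swap_values.
  by move=> [a b] [c d] [/perm_inj -> /perm_inj ->].
rewrite /inv_num -(card_imset _ swap_inj); apply: eq_card => [[u v]].
rewrite inE /=; apply/imsetP/idP.
- by move=> [[i j]]; rewrite inE /= => /andP [lt_ij lt_pji] [-> ->]; rewrite !permK lt_pji lt_ij.
- move=> /andP [lt_uv lt_pVvu]; exists ((p^-1)%g v, (p^-1)%g u).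
    by rewrite inE /= !permKV lt_uv lt_pVvu.
  by rewrite /swap_values /= !permKV.
Qed.

Lemma card_pair_sum n (P : 'I_n * 'I_n -> bool) :
  #|[set uv | P uv]| = \sum_(v < n) \sum_(u < n) P (u, v).
Proof.
rewrite exchange_big pair_bigA /= -sum1_card big_mkcond /=.
by apply: eq_bigr => [[u v]] _; rewrite inE; case: (P _).
Qed.

Lemma sum_ord_prefix n v (G : nat -> bool) : v <= n ->
  \sum_(u < n) ((u < v) && G u) = \sum_(u < v) G u.
Proof.
move=> le_vn; transitivity (\sum_(0 <= u < n) ((u < v) && G u)); first by rewrite big_mkord.
rewrite (big_cat_nat (leq0n v) le_vn) /=.
rewrite [X in _ + X]big_nat_cond [X in _ + X]big1 ?addn0; last first.
  by move=> i /andP [/andP [le_vi _] _]; rewrite ltnNge le_vi.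
by rewrite big_mkord; apply: eq_bigr => i _; rewrite ltn_ord.
Qed.

Lemma sum_pcount_geq (b : bool) (f : nat -> bool) (c v : nat) :
  \sum_(u < v) ((f u == b) && (c <= pcount b f u)) = pcount b f v - c.
Proof.
elim: v => [|v IH]; first by rewrite big_ord0 pcount0.
by rewrite big_ord_recr /= IH pcountS; case: (f v == b); case: (leqP c (pcount b f v)) => /=; lia.
Qed.

(* The number of values [u < v] placed after [v]. *)
Definition inv_contrib f v :=
  if f v then pcount false f v - pcount true f v
  else pcount true f v - pcount false f v - 1.

Lemma inv_contribE f v : \sum_(u < v) (place f v < place f u) = inv_contrib f v.
Proof.
rewrite /inv_contrib; case fv: (f v).
- rewrite -sum_pcount_geq; apply: eq_bigr => u _.
  have lt_uv := ltn_ord u; rewrite /place fv; case fu: (f u) => /=.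
  + by have := ltn_pcount lt_uv fu; lia.
  + by congr nat_of_bool; apply/idP/idP; lia.
- rewrite (_ : pcount true f v - pcount false f v - 1 =
               pcount true f v - (pcount false f v).+1); last lia.
  rewrite -sum_pcount_geq; apply: eq_bigr => u _.
  have lt_uv := ltn_ord u; rewrite /place fv; case fu: (f u) => /=.
  + by congr nat_of_bool; apply/idP/idP; lia.
  + by have := ltn_pcount lt_uv fu; lia.
Qed.

Definition inv_word n f := \sum_(v < n) inv_contrib f v.

Lemma inv_num_arrange n f : balanced n f -> inv_num (arrange n f) = inv_word n f.
Proof.
move=> bal; rewrite inv_num_invg card_pair_sum /inv_word; apply: eq_bigr => v _ /=.
rewrite -inv_contribE -(sum_ord_prefix (fun u => place f v < place f u) (ltnW (ltn_ord v))).
by apply: eq_bigr => u _; rewrite !arrangeVE.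
Qed.

Definition Ipoly_starts (up : bool) n : {poly int} :=
  (\sum_(p : 'S_n | avoids_all PiSet p && (starts_up p == up)) 'X^(inv_num p))%R.

Lemma Ipoly_starts_split n : Ipoly PiSet n = (Ipoly_starts true n + Ipoly_starts false n)%R.
Proof.
rewrite /Ipoly (bigID (fun p => starts_up p)) /=.
by congr (_ + _)%R; apply: eq_bigl => p; case: (starts_up p).
Qed.

Section DyckEncoding.

Variables (n m : nat) (up : bool) (c : nat).
Local Notation path := ((m.*2).-tuple bool).
Variable g : path -> nat -> bool.

Hypothesis lt1n : 1 < n.
Hypothesis g_ballot : forall t : path, is_dyck m t -> balanced n (g t) /\ ballot up n (g t).
Hypothesis g_onto : forall f, balanced n f -> ballot up n f ->
  exists2 t : path, is_dyck m t & forall v, v < n -> g t v = f v.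
Hypothesis g_inj : forall t t' : path, (forall v, v < n -> g t v = g t' v) -> t = t'.
Hypothesis inv_word_g : forall t : path, is_dyck m t -> inv_word n (g t) = c + area t.

Let dyck := [set t : path | is_dyck m t].
Let perm_of_path (t : path) := arrange n (g t).

Lemma perm_of_path_inj : {in dyck &, injective perm_of_path}.
Proof.
move=> t t'; rewrite !inE => dyck_t dyck_t' e; apply: g_inj => v lt_vn.
have [bal _] := g_ballot dyck_t; have [bal' _] := g_ballot dyck_t'.
by rewrite (arrange_parity bal lt_vn) (arrange_parity bal' lt_vn) -/(perm_of_path t) e.
Qed.

Lemma perm_of_path_image :
  [set p : 'S_n | avoids_all PiSet p && (starts_up p == up)] = perm_of_path @: dyck.
Proof.
apply/setP => p; rewrite inE; apply/idP/imsetP.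
- move=> /(avoids_starts_upP p up lt1n) [inc alt].
  have bal := balanced_parity_word p.
  have [t dyck_t gt] : exists2 t : path, is_dyck m t & forall v, v < n -> g t v = parity_word p v.
    by apply: g_onto => //; apply/(ballotP _ bal); rewrite arrange_parity_word.
  by exists t; rewrite ?inE // /perm_of_path (eq_arrange gt) arrange_parity_word.
- move=> [t]; rewrite inE => dyck_t ->; have [bal ballot_t] := g_ballot dyck_t.
  apply/(avoids_starts_upP _ up lt1n); split; first exact: arrange_skip_increasing.
  exact/(ballotP _ bal).
Qed.

Lemma Ipoly_starts_dyck : Ipoly_starts up n = ('X^c * Cq m)%R.
Proof.
rewrite /Ipoly_starts (eq_bigl (fun p => p \in perm_of_path @: dyck)); last first.
  by move=> p; rewrite -perm_of_path_image inE.
rewrite big_imset /=; last exact: perm_of_path_inj.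
rewrite /Cq mulr_sumr; apply: eq_big => t; first by rewrite inE.
rewrite inE => dyck_t; have [bal _] := g_ballot dyck_t.
by rewrite inv_num_arrange // inv_word_g // exprD.
Qed.

End DyckEncoding.

Lemma count_take_pcount b (s : seq bool) j : j <= size s ->
  count (fun x => x == b) (take j s) = pcount b (nth false s) j.
Proof.
elim: j => [|j IH] le_js; first by rewrite take0 pcount0.
by rewrite (take_nth false) // -cats1 count_cat /= addn0 IH ?(ltnW le_js) // pcountS.
Qed.

Lemma n_north_take s j : j <= size s -> n_north (take j s) = pcount true (nth false s) j.
Proof. by move=> le_js; rewrite -count_take_pcount //; apply: eq_count; case. Qed.

Lemma n_east_take s j : j <= size s -> n_east (take j s) = pcount false (nth false s) j.
Proof. by move=> le_js; rewrite -count_take_pcount //; apply: eq_count; case. Qed.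

Lemma is_dyckP m (t : seq bool) : size t = m.*2 -> is_dyck m t <->
  [/\ pcount true (nth false t) m.*2 = m, pcount false (nth false t) m.*2 = m &
      forall j, j <= m.*2 -> pcount false (nth false t) j <= pcount true (nth false t) j].
Proof.
move=> st; rewrite /is_dyck; split.
- move=> /and3P [/eqP north /eqP east /allP prefix]; split.
  + by rewrite -n_north_take ?st // -st take_size.
  + by rewrite -n_east_take ?st // -st take_size.
  + move=> j le_j; rewrite -n_north_take -?n_east_take ?st //; apply: prefix.
    by rewrite mem_iota add0n st ltnS le_j.
- move=> [north east prefix]; apply/and3P; split.
  + by rewrite -(take_size t) n_north_take // st north.
  + by rewrite -(take_size t) n_east_take // st east.
  + apply/allP => j; rewrite mem_iota add0n st ltnS => le_j.
    by rewrite n_north_take ?n_east_take ?st //; apply: prefix.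
Qed.

Lemma dyck_step m (t : seq bool) j : size t = m.*2 -> is_dyck m t -> j < m.*2 ->
  pcount false (nth false t) j + (~~ nth false t j) <= pcount true (nth false t) j.
Proof.
move=> st /(is_dyckP st) [_ _ prefix] lt_j; have := prefix j (ltnW lt_j).
by have := prefix j.+1 lt_j; rewrite !pcountS; case: (nth false t j) => /=; lia.
Qed.

(* The east step at index [v] leaves the point
   ([x] + #east steps before [v], [y] + #north steps before [v]). *)
Lemma area_auxE s x y : area_aux s x y = \sum_(v < size s)
  (if nth false s v then 0
   else (y + pcount true (nth false s) v) - (x + pcount false (nth false s) v).+1).
Proof.
elim: s x y => [|a s IH] x y; first by rewrite big_ord0.
rewrite /= big_ord_recl /=; case: a.
- rewrite IH add0n; apply: eq_bigr => i _.
  by rewrite /= !pcount_shift /= !add0n addnA addn1.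
- rewrite IH !pcount0 !addn0; congr (_ + _); apply: eq_bigr => i _.
  by rewrite /bump /= !pcount_shift /= !add0n addnA addn1.
Qed.

Definition tuple_of m (F : nat -> bool) : (m.*2).-tuple bool :=
  @Tuple (m.*2) bool (mkseq F m.*2) (introT eqP (size_mkseq F m.*2)).

Lemma nth_tuple_of m F i : nth false (tuple_of m F) i = if i < m.*2 then F i else false.
Proof.
case: ifP => lt_i; first by rewrite nth_mkseq.
by rewrite nth_default // size_mkseq leqNgt lt_i.
Qed.

Definition up_word m (t : (m.*2).-tuple bool) : nat -> bool := nth false (true :: t).

Lemma pcount_up_word b m (t : (m.*2).-tuple bool) j :
  pcount b (up_word t) j.+1 = (true == b) + pcount b (nth false t) j.
Proof. exact: pcount_shift. Qed.

Lemma up_word_ballot n m (t : (m.*2).-tuple bool) : n = m.*2 + 1 \/ n = m.*2 + 2 ->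
  is_dyck m t -> balanced n (up_word t) /\ ballot_up n (up_word t).
Proof.
move=> en dyck_t; have st : size t = m.*2 by rewrite size_tuple.
have [north east _] := (is_dyckP st).1 dyck_t.
split.
- have last_false : up_word t (m.*2).+1 = false by rewrite /up_word /= nth_default ?st.
  rewrite /balanced; case: en => ->.
  + by rewrite addn1 pcount_up_word east /=; lia.
  + by rewrite addn2 pcountS last_false pcount_up_word east /=; lia.
- move=> [|j] lt_jn //= fj; rewrite !pcount_up_word /=; rewrite /up_word /= in fj.
  case: (ltnP j m.*2) => lt_jm.
  + by have := dyck_step st dyck_t lt_jm; rewrite fj /=; case: ifP; lia.
  + have -> : j = m.*2 by case: en; lia.
    by rewrite north east; case: ifP; lia.
Qed.

Section BallotUp.

Variables (n m : nat) (f : nat -> bool).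
Hypothesis en : (n = m.*2 + 1 /\ 0 < m) \/ n = m.*2 + 2.
Hypotheses (bal : balanced n f) (ballot : ballot_up n f).

Let lt1n : 1 < n. Proof. by case: en => [[-> ?]|->]; lia. Qed.

Lemma ballot_up_head : f 0.
Proof.
apply: negbNE; apply/negP => /negbTE f0; have := ballot (ltnW lt1n) f0.
by rewrite !pcount0; case: ifP; lia.
Qed.

Lemma ballot_up_prefix u : u <= n -> pcount false f u <= pcount true f u.
Proof.
elim: u => [|u IH] le_un; first by rewrite !pcount0.
rewrite !pcountS; case fu: (f u) => /=; first by have := IH (ltnW le_un); lia.
by have := ballot le_un fu; have := IH (ltnW le_un); case: ifP; lia.
Qed.

Lemma ballot_up_last : n = m.*2 + 2 -> f (m.*2).+1 = false.
Proof.
move=> en2; apply/negP => f_last; move: bal; rewrite /balanced en2 addn2 pcountS f_last /=.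
have := ballot_up_prefix (_ : (m.*2).+1 <= n); rewrite en2 addn2.
by have := pcountTF f (m.*2).+1; lia.
Qed.

Lemma ballot_up_east : pcount false f (m.*2).+1 = m.
Proof.
move: bal; rewrite /balanced; case: en => [[en1 _]|en2]; first by rewrite en1 addn1; lia.
by rewrite en2 addn2 pcountS ballot_up_last //=; lia.
Qed.

Lemma ballot_up_strict j : j <= m.*2 -> pcount false f j.+1 + 1 <= pcount true f j.+1.
Proof.
elim: j => [|j IH] le_jm; first by rewrite !pcountS !pcount0 ballot_up_head.
rewrite (pcountS false) (pcountS true); case fj: (f j.+1) => /=.
  by have := IH (ltnW le_jm); lia.
have lt_east := ltn_pcount (_ : j.+1 < (m.*2).+1) fj; rewrite ballot_up_east in lt_east.
have := ballot (_ : j.+1 < n) fj; have := IH (ltnW le_jm); have := lt_east le_jm.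
by rewrite ifT; [lia | case: en => [[-> _]|->]; lia].
Qed.

End BallotUp.

Lemma up_word_onto n m f : (n = m.*2 + 1 /\ 0 < m) \/ n = m.*2 + 2 ->
  balanced n f -> ballot_up n f ->
  exists2 t : (m.*2).-tuple bool, is_dyck m t & forall v, v < n -> up_word t v = f v.
Proof.
move=> en bal ballot; have f0 := ballot_up_head en bal ballot.
have pcount_t b j : j <= m.*2 ->
    pcount b (nth false (tuple_of m (fun i => f i.+1))) j = pcount b f j.+1 - (f 0 == b).
  move=> le_jm; rewrite pcount_shift addKn; apply: eq_pcount => u lt_uj.
  by rewrite nth_tuple_of ifT //; lia.
exists (tuple_of m (fun i => f i.+1)).
- apply/(is_dyckP (size_tuple _)); split.
  + rewrite pcount_t // f0 /=; have := pcountTF f (m.*2).+1.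
    by have := ballot_up_east en bal ballot; lia.
  + by rewrite pcount_t // f0 /= (ballot_up_east en bal ballot) subn0.
  + move=> j le_jm; rewrite !pcount_t // f0 /=.
    by have := ballot_up_strict en bal ballot le_jm; lia.
- case=> [|j] lt_jn; first by rewrite /up_word /= f0.
  rewrite /up_word /= nth_tuple_of; case: ifP => // lt_jm.
  have en2 : n = m.*2 + 2 by case: en => [[en1 _]|//]; lia.
  by rewrite (_ : j = m.*2); [rewrite (ballot_up_last en bal ballot) | lia].
Qed.

Lemma up_word_inj n m (t t' : (m.*2).-tuple bool) : m.*2 < n ->
  (forall v, v < n -> up_word t v = up_word t' v) -> t = t'.
Proof.
move=> lt_mn tt'; apply/val_inj/(eq_from_nth (x0 := false)); first by rewrite !size_tuple.
by move=> i; rewrite size_tuple => lt_im; have := tt' i.+1; rewrite /up_word /=; apply; lia.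
Qed.

Lemma inv_word_up n m (t : (m.*2).-tuple bool) : n = m.*2 + 1 \/ n = m.*2 + 2 ->
  is_dyck m t -> inv_word n (up_word t) = m + area t.
Proof.
move=> en dyck_t; have st : size t = m.*2 by rewrite size_tuple.
have [north east prefix] := (is_dyckP st).1 dyck_t.
have contrib_path : \sum_(j < m.*2) inv_contrib (up_word t) j.+1 = m + area t.
  rewrite /area area_auxE st -[X in _ = X + _]east /pcount -big_split /=.
  apply: eq_bigr => j _; rewrite /inv_contrib -/(pcount _ _ _) !pcount_up_word /up_word /=.
  have := dyck_step st dyck_t (ltn_ord j); have := prefix j (ltnW (ltn_ord j)).
  by rewrite -/(pcount false (nth false t) j); case: (nth false t j) => /=; lia.
have contrib0 : inv_contrib (up_word t) 0 = 0 by rewrite /inv_contrib /up_word /= !pcount0.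
rewrite /inv_word; case: en => ->; rewrite ?addn1 ?addn2 big_ord_recl contrib0 add0n.
- by rewrite -contrib_path; apply: eq_bigr => i _; rewrite /bump.
- rewrite big_ord_recr /= -contrib_path (_ : inv_contrib _ _ = 0) ?addn0.
    by apply: eq_bigr => i _; rewrite /bump.
  rewrite /inv_contrib /up_word /= nth_default ?st // !pcount_up_word north east /=; lia.
Qed.

Definition down_word m (t : (m.*2).-tuple bool) : nat -> bool := nth true (map negb t).

Lemma down_wordE m (t : (m.*2).-tuple bool) v :
  down_word t v = if v < m.*2 then ~~ nth false t v else true.
Proof.
rewrite /down_word; case: ifP => lt_vm; first by rewrite (nth_map false) // size_tuple.
by rewrite nth_default // size_map size_tuple leqNgt lt_vm.
Qed.

Lemma pcount_down_word b m (t : (m.*2).-tuple bool) j : j <= m.*2 ->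
  pcount b (down_word t) j = pcount (~~ b) (nth false t) j.
Proof.
move=> le_jm; apply: eq_bigr => u _; have lt_uj := ltn_ord u.
by rewrite down_wordE ifT; [case: b; case: (nth false t u) | lia].
Qed.

Lemma down_word_ballot n m (t : (m.*2).-tuple bool) : n = m.*2 + 1 \/ n = m.*2 ->
  is_dyck m t -> balanced n (down_word t) /\ ballot_down n (down_word t).
Proof.
move=> en dyck_t; have st : size t = m.*2 by rewrite size_tuple.
have [north east _] := (is_dyckP st).1 dyck_t.
have le_mn : m.*2 <= n by case: en; lia.
split.
- rewrite /balanced; case: en => ->.
  + by rewrite addn1 pcountS pcount_down_word // down_wordE ltnn /= north; lia.
  + by rewrite pcount_down_word // north; lia.
- move=> v lt_vn fv; rewrite down_wordE in fv; rewrite !pcount_down_word /=; try lia.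
  move: fv; case: ifP => lt_vm fv.
  + by have := dyck_step st dyck_t lt_vm; rewrite fv /=; lia.
  + have -> : v = m.*2 by case: en; lia.
    by rewrite east; case: en; lia.
Qed.

Section BallotDown.

Variables (n m : nat) (f : nat -> bool).
Hypothesis en : n = m.*2 + 1 \/ n = m.*2.
Hypotheses (bal : balanced n f) (ballot : ballot_down n f).

Lemma ballot_down_prefix u : u <= m.*2 -> pcount true f u <= pcount false f u.
Proof.
elim: u => [|u IH] le_um; first by rewrite !pcount0.
rewrite !pcountS; case fu: (f u) => /=; last by have := IH (ltnW le_um); lia.
have := IH (ltnW le_um); have := pcountTF f u.
by have := ballot (_ : u < n) fu (_ : 2 * pcount true f u + 1 < n); case: en => ->; lia.
Qed.

Lemma ballot_down_last : n = m.*2 + 1 -> f m.*2.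
Proof.
move=> en1; apply: negbNE; apply/negP => /negbTE f_last.
move: bal; rewrite /balanced en1 addn1 pcountS f_last /=.
by have := ballot_down_prefix (leqnn _); have := pcountTF f m.*2; lia.
Qed.

Lemma ballot_down_east : pcount false f m.*2 = m.
Proof.
move: bal; rewrite /balanced; case: en => [en1|->]; last by lia.
by rewrite en1 addn1 pcountS ballot_down_last //= addn0; lia.
Qed.

End BallotDown.

Lemma down_word_onto n m f : n = m.*2 + 1 \/ n = m.*2 ->
  balanced n f -> ballot_down n f ->
  exists2 t : (m.*2).-tuple bool, is_dyck m t & forall v, v < n -> down_word t v = f v.
Proof.
move=> en bal ballot.
have pcount_t b j : j <= m.*2 ->
    pcount b (nth false (tuple_of m (fun i => ~~ f i))) j = pcount (~~ b) f j.
  move=> le_jm; apply: eq_bigr => u _; have lt_uj := ltn_ord u.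
  by rewrite nth_tuple_of ifT; [case: b; case: (f u) | lia].
exists (tuple_of m (fun i => ~~ f i)).
- apply/(is_dyckP (size_tuple _)); split.
  + by rewrite pcount_t // (ballot_down_east en bal ballot).
  + rewrite pcount_t //=; have := pcountTF f m.*2.
    by have := ballot_down_east en bal ballot; lia.
  + by move=> j le_jm; rewrite !pcount_t //=; apply: (ballot_down_prefix en bal ballot).
- move=> v lt_vn; rewrite down_wordE; case: ifP => lt_vm.
  + by rewrite nth_tuple_of lt_vm negbK.
  + have en1 : n = m.*2 + 1 by case: en; lia.
    by rewrite (_ : v = m.*2); [rewrite (ballot_down_last en bal ballot) | lia].
Qed.

Lemma down_word_inj n m (t t' : (m.*2).-tuple bool) : m.*2 <= n ->
  (forall v, v < n -> down_word t v = down_word t' v) -> t = t'.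
Proof.
move=> le_mn tt'; apply/val_inj/(eq_from_nth (x0 := false)); first by rewrite !size_tuple.
move=> i; rewrite size_tuple => lt_im; have := tt' i; rewrite !down_wordE lt_im.
by move=> e; apply/negb_inj/e; lia.
Qed.

Lemma inv_word_down n m (t : (m.*2).-tuple bool) : n = m.*2 + 1 \/ n = m.*2 ->
  is_dyck m t -> inv_word n (down_word t) = m + area t.
Proof.
move=> en dyck_t; have st : size t = m.*2 by rewrite size_tuple.
have [north east prefix] := (is_dyckP st).1 dyck_t.
have contrib_path : \sum_(j < m.*2) inv_contrib (down_word t) j = m + area t.
  rewrite /area area_auxE st -[X in _ = X + _]east /pcount -big_split /=.
  apply: eq_bigr => j _; have lt_jm := ltn_ord j.
  rewrite /inv_contrib -/(pcount _ _ _) !pcount_down_word ?(ltnW lt_jm) // down_wordE lt_jm /=.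
  have := dyck_step st dyck_t lt_jm; have := prefix j (ltnW lt_jm).
  by rewrite -/(pcount false (nth false t) j); case: (nth false t j) => /=; lia.
rewrite /inv_word; case: en => ->; last exact: contrib_path.
rewrite addn1 big_ord_recr /= contrib_path /inv_contrib down_wordE ltnn /=.
by rewrite !pcount_down_word //= north east subnn addn0.
Qed.

Lemma Ipoly_starts_up n m : (n = m.*2 + 1 /\ 0 < m) \/ n = m.*2 + 2 ->
  Ipoly_starts true n = ('X^m * Cq m)%R.
Proof.
move=> en; have en' : n = m.*2 + 1 \/ n = m.*2 + 2 by case: en => [[]|]; [left|right].
apply: (Ipoly_starts_dyck (g := @up_word m)).
- by case: en => [[-> ?]|->]; lia.
- by move=> t; apply: up_word_ballot.
- by move=> f; apply: up_word_onto.
- by move=> t t'; apply: up_word_inj; case: en' => ->; lia.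
- by move=> t; apply: inv_word_up.
Qed.

Lemma Ipoly_starts_down n m : 0 < m -> n = m.*2 + 1 \/ n = m.*2 ->
  Ipoly_starts false n = ('X^m * Cq m)%R.
Proof.
move=> lt0m en; apply: (Ipoly_starts_dyck (g := @down_word m)).
- by case: en => ->; lia.
- by move=> t; apply: down_word_ballot.
- by move=> f; apply: down_word_onto.
- by move=> t t'; apply: down_word_inj; case: en => ->; lia.
- by move=> t; apply: inv_word_down.
Qed.

Local Open Scope ring_scope.

Theorem mainTheorem7 (k : nat) (hk : (1 <= k)%N) :
  Ipoly PiSet (2 * k + 1) = 2 * ('X^k * Cq k)
  /\ Ipoly PiSet (2 * k) = 'X^(k - 1) * Cq (k - 1) + 'X^k * Cq k.
Proof.
rewrite !Ipoly_starts_split; split.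
- rewrite (Ipoly_starts_up (m := k)); last by left; rewrite mul2n.
  rewrite (Ipoly_starts_down hk); last by left; rewrite mul2n.
  by rewrite mulr_natl mulr2n.
- rewrite (Ipoly_starts_up (m := k - 1)); last by right; rewrite -mul2n; lia.
  by rewrite (Ipoly_starts_down hk) //; right; rewrite mul2n.
Qed.
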